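(* Let $L$ be a cosimplicial group. The map sending a morphism of cosimplicial groups $h\colon F\to L$ to $h^1(a_1)\in L_1$ is a bijection from the set of cosimplicial morphisms $F\to L$ onto $Z^1(L)$. The morphism $h_b$ corresponding to $b\in Z^1(L)$ is given by $h_b^n(a_j)=(d^0)^{j-1}(d^2)^{n-j}(b)$ for $1\le j\le n$.
   Context: $F$ is the cosimplicial group with $F_n$ the free group on $a_1,\dots,a_n$ ($F_0$ trivial), cofaces $d^i\colon F_{n-1}\to F_n$: $d^0(a_j)=a_{j+1}$; for $1\le i\le n-1$, $d^i(a_j)=a_j$ ($j<i$), $d^i(a_i)=a_ia_{i+1}$, $d^i(a_j)=a_{j+1}$ ($j>i$); $d^n(a_j)=a_j$; codegeneracies $s^i\colon F_{n+1}\to F_n$: $s^i(a_j)=a_j$ ($j\le i$), $s^i(a_{i+1})=e$, $s^i(a_j)=a_{j-1}$ ($j>i+1$). For a cosimplicial group $L$ (functor $\Delta\to\mathbf{Grp}$, $L_n=L([n])$, cofaces $d^i$, codegeneracies $s^i$), $Z^1(L)=\{b\in L_1: d^2(b)d^0(b)=d^1(b)\}$. A morphism of cosimplicial groups $h\colon F\to L$ is a natural transformation, with components $h^n\colon F_n\to L_n$. *)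

From mathcomp Require Import all_boot.
Unset Implicit Arguments. Unset Strict Implicit. Unset Printing Implicit Defensive.

Record grp := Grp {
  gcar :> Type;
  gmul : gcar -> gcar -> gcar;
  gone : gcar;
  ginv : gcar -> gcar;
  gmulA : forall x y z, gmul x (gmul y z) = gmul (gmul x y) z;
  gmul1g : forall x, gmul gone x = x;
  gmulg1 : forall x, gmul x gone = x;
  gmulVg : forall x, gmul (ginv x) x = gone;
  gmulgV : forall x, gmul x (ginv x) = gone
}.

Arguments gmul {g} x y.
Arguments gone {g}.
Arguments ginv {g} x.

(*   cof n i   = d^i : L_n -> L_(n+1),      0 <= i <= n+1              *)
(*   codeg n i = s^i : L_(n+1) -> L_n,      0 <= i <= n                *)
Record cosimp_grp := CosimpGrp {
  cobj :> nat -> grp;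
  cof : forall n, nat -> cobj n -> cobj n.+1;
  codeg : forall n, nat -> cobj n.+1 -> cobj n;
  cof_mul : forall n i x y, i <= n.+1 ->
    cof n i (gmul x y) = gmul (cof n i x) (cof n i y);
  codeg_mul : forall n i x y, i <= n ->
    codeg n i (gmul x y) = gmul (codeg n i x) (codeg n i y);
  cof_cof : forall n i j x, i < j -> j <= n.+2 ->
    cof n.+1 j (cof n i x) = cof n.+1 i (cof n j.-1 x);
  codeg_codeg : forall n i j x, i <= j -> j <= n ->
    codeg n j (codeg n.+1 i x) = codeg n i (codeg n.+1 j.+1 x);
  codeg_cof_lt : forall m i j x, i < j -> j <= m.+1 ->
    codeg m.+1 j (cof m.+1 i x) = cof m i (codeg m j.-1 x);
  codeg_cof_eq : forall n j x, j <= n -> codeg n j (cof n j x) = x;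
  codeg_cof_succ : forall n j x, j <= n -> codeg n j (cof n j.+1 x) = x;
  codeg_cof_gt : forall m i j x, j.+1 < i -> i <= m.+2 ->
    codeg m.+1 j (cof m.+1 i x) = cof m i.-1 (codeg m j x)
}.

Arguments cof {c} n i x.
Arguments codeg {c} n i x.

Definition Z1 {L : cosimp_grp} (b : L 1) : Prop :=
  gmul (cof 1 2 b) (cof 1 0 b) = cof 1 1 b.

Fixpoint iter_cof (L : cosimp_grp) (i k m : nat) : L m -> L (k + m) :=
  match k return L m -> L (k + m) with
  | 0 => fun x => x
  | k'.+1 => fun x => cof (k' + m) i (iter_cof L i k' m x)
  end.

(* The free group F_n on a_1,...,a_n as reduced words.                 *)
(* A letter (k, false) is a_(k+1), (k, true) is a_(k+1)^-1.            *)
Definition letter (n : nat) := ('I_n * bool)%type.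

Definition cancels {n} (x y : letter n) : bool := (x.1 == y.1) && (x.2 != y.2).

Definition reduced {n} (w : seq (letter n)) : bool :=
  sorted (fun x y => ~~ cancels x y) w.

Definition cons_red {n} (x : letter n) (w : seq (letter n)) : seq (letter n) :=
  match w with
  | y :: w' => if cancels x y then w' else x :: w
  | [::] => [:: x]
  end.

Definition reduce {n} (w : seq (letter n)) : seq (letter n) :=
  foldr (@cons_red n) [::] w.

Lemma reduce_reduced n (w : seq (letter n)) : reduced (reduce w).
Proof.
elim: w => [|x w IH] //=.
rewrite /cons_red; move: IH; case: (reduce w) => [|y w'] //= Hs.
case: ifP => Hc; first by move: Hs; case: w' => //= z w'' /andP[].
by rewrite /= Hc Hs.
Qed.

Definition FG (n : nat) := {w : seq (letter n) | reduced w}.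

Definition FGmul {n} (u v : FG n) : FG n :=
  exist _ (reduce (sval u ++ sval v)) (reduce_reduced _ _).

Definition agen {n} (k : 'I_n) : FG n := exist _ [:: (k, false)] isT.

Lemma lt_gen (i k : nat) : i < i + (k + 1).
Proof. by rewrite addn1 addnS ltnS leq_addr. Qed.

Definition inv_word {n} (w : seq (letter n)) : seq (letter n) :=
  rev (map (fun x => (x.1, ~~ x.2)) w).

Definition Fext {n m} (f : 'I_n -> seq (letter m)) (u : FG n) : FG m :=
  exist _ (reduce (flatten (map (fun x : letter n =>
                     if x.2 then inv_word (f x.1) else f x.1) (sval u))))
        (reduce_reduced _ _).

(* the one-letter word a_(t+1) in F_n (empty if t >= n, never used so) *)
Definition ow n (t : nat) : seq (letter n) :=
  if @insub _ (fun j => j < n) 'I_n t is Some o then [:: (o, false)] else [::].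

(* coface d^i : F_n -> F_(n+1) on the generator a_(k+1):
   d^i(a_j) = a_j (j < i), a_i a_(i+1) (j = i), a_(j+1) (j > i) *)
Definition Fcof_img n (i : nat) (k : 'I_n) : seq (letter n.+1) :=
  if k.+1 < i then ow n.+1 k
  else if k.+1 == i then ow n.+1 k ++ ow n.+1 k.+1
  else ow n.+1 k.+1.

Definition Fcof n (i : nat) : FG n -> FG n.+1 := Fext (Fcof_img n i).

(* codegeneracy s^i : F_(n+1) -> F_n on the generator a_(k+1):
   s^i(a_j) = a_j (j <= i), e (j = i+1), a_(j-1) (j > i+1) *)
Definition Fcodeg_img n (i : nat) (k : 'I_n.+1) : seq (letter n) :=
  if k < i then ow n k
  else if k == i :> nat then [::]
  else ow n k.-1.

Definition Fcodeg n (i : nat) : FG n.+1 -> FG n := Fext (Fcodeg_img n i).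

Record cmor (L : cosimp_grp) := CMor {
  hmap :> forall n, FG n -> L n;
  hmap_mul : forall n u v, hmap n (FGmul u v) = gmul (hmap n u) (hmap n v);
  hmap_cof : forall n i u, i <= n.+1 ->
    hmap n.+1 (Fcof n i u) = cof n i (hmap n u);
  hmap_codeg : forall n i u, i <= n ->
    hmap n (Fcodeg n i u) = codeg n i (hmap n.+1 u)
}.

Arguments hmap {L} c n u.

Definition a1 : FG 1 := agen ord0.

From mathcomp Require Import all_boot zify.

(* A morphism h : F -> L is determined by h^1(a_1): F_n is generated by the
   a_j, and a_j = (d^0)^(j-1) (d^2)^(n-j) a_1.  Since d^1 a_1 = a_1 a_2
   = d^2 a_1 . d^0 a_1 in F_2, h^1(a_1) is a cocycle.  Conversely, for a
   cocycle b the elements (d^0)^(j-1) (d^2)^(n-j) b define, by evaluating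
   words, group morphisms F_n -> L_n, and compatibility with cofaces and
   codegeneracies only has to be checked on generators.  There each instance
   is a cosimplicial identity, except d^j a_j = a_j a_(j+1), which is the
   cocycle condition transported by (d^0)^(j-1) (d^2)^(n-j-1), and
   s^(j-1) a_j = e, which reduces to s^0 b = 1 (apply s^0 to the cocycle
   condition). *)

Section GroupFacts.

Context {g : grp}.
Implicit Types x y z : g.

Lemma gmulI x y z : gmul x y = gmul x z -> y = z.
Proof.
move=> E; rewrite -(gmul1g _ y) -(gmul1g _ z) -(gmulVg _ x) -!gmulA.
by rewrite E.
Qed.

Lemma gidem_eq1 x : gmul x x = x -> x = gone.
Proof. by move=> E; apply: (gmulI x); rewrite E gmulg1. Qed.

Lemma ginv_unique x y : gmul x y = gone -> y = ginv x.
Proof. by move=> E; apply: (gmulI x); rewrite E gmulgV. Qed.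

Lemma ginvK x : ginv (ginv x) = x.
Proof. by symmetry; apply: ginv_unique; rewrite gmulVg. Qed.

Lemma ginv1 : ginv (@gone g) = gone.
Proof. by symmetry; apply: ginv_unique; rewrite gmul1g. Qed.

Lemma ginvM x y : ginv (gmul x y) = gmul (ginv y) (ginv x).
Proof.
symmetry; apply: ginv_unique.
by rewrite -gmulA (gmulA _ y) gmulgV gmul1g gmulgV.
Qed.

End GroupFacts.

Section GroupMorphism.

Variables (g h : grp) (f : g -> h).
Hypothesis f_mul : forall x y, f (gmul x y) = gmul (f x) (f y).

Lemma gmorph1 : f gone = gone.
Proof. by apply: gidem_eq1; rewrite -f_mul gmul1g. Qed.

Lemma gmorphV x : f (ginv x) = ginv (f x).
Proof. by apply: ginv_unique; rewrite -f_mul gmulgV gmorph1. Qed.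

End GroupMorphism.

Section WordEvaluation.

Context {g : grp} {n : nat}.
Variable gen : 'I_n -> g.

Definition eval_letter (x : letter n) : g :=
  if x.2 then ginv (gen x.1) else gen x.1.

Definition eval_word (w : seq (letter n)) : g :=
  foldr (fun x acc => gmul (eval_letter x) acc) gone w.

Lemma eval_word_cat w1 w2 :
  eval_word (w1 ++ w2) = gmul (eval_word w1) (eval_word w2).
Proof.
elim: w1 => [|x w IH] /=; first by rewrite gmul1g.
by rewrite IH gmulA.
Qed.

Lemma eval_word_cons_red x w :
  eval_word (cons_red x w) = gmul (eval_letter x) (eval_word w).
Proof.
case: w => [|y w] //=; case: ifP => // /andP[/eqP E1 E2].
rewrite gmulA; suff -> : gmul (eval_letter x) (eval_letter y) = gone by rewrite gmul1g.
case: x y E1 E2 => k s [k' s'] /= <-; rewrite /eval_letter /=.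
by case: s; case: s' => //= _; rewrite ?gmulgV ?gmulVg.
Qed.

Lemma eval_word_reduce w : eval_word (reduce w) = eval_word w.
Proof. by elim: w => [//|x w IH]; rewrite /= eval_word_cons_red IH. Qed.

Lemma eval_word_inv w : eval_word (inv_word w) = ginv (eval_word w).
Proof.
elim: w => [|x w IH]; first by rewrite /= ginv1.
rewrite /inv_word map_cons rev_cons -cats1 eval_word_cat -/(inv_word w) IH /=.
rewrite gmulg1 ginvM; congr gmul.
by rewrite /eval_letter /=; case: x.2 => //=; rewrite ginvK.
Qed.

End WordEvaluation.

Lemma eval_word_Fext {g h : grp} {n m} (gen : 'I_n -> g) (gen' : 'I_m -> h)
    (f : 'I_n -> seq (letter m)) (phi : g -> h) :
  (forall x y, phi (gmul x y) = gmul (phi x) (phi y)) ->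
  (forall k, eval_word gen' (f k) = phi (gen k)) ->
  forall u : FG n, eval_word gen' (sval (Fext f u)) = phi (eval_word gen (sval u)).
Proof.
move=> phi_mul f_gen [w w_red]; rewrite /Fext /= eval_word_reduce.
elim: w {w_red} => [|x w IH] /=; first by rewrite gmorph1.
rewrite eval_word_cat IH phi_mul; congr gmul.
case: x => k [] /=; rewrite /eval_letter /=; last exact: f_gen.
by rewrite eval_word_inv f_gen gmorphV.
Qed.

Lemma reduce_id n (w : seq (letter n)) : reduced w -> reduce w = w.
Proof.
elim: w => [//|x w IH] Hw; rewrite /= IH; last exact: path_sorted Hw.
by case: w {IH} Hw => [//|y w] /= /andP[/negbTE ->].
Qed.

Lemma FG_morph_eval {g : grp} {n} (f : FG n -> g) (gen : 'I_n -> g) :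
  (forall u v, f (FGmul u v) = gmul (f u) (f v)) ->
  (forall k, f (agen k) = gen k) ->
  forall u : FG n, f u = eval_word gen (sval u).
Proof.
move=> f_mul f_gen.
have f1 : f (exist _ [::] isT) = gone.
  by apply: gidem_eq1; rewrite -f_mul; congr f; apply: val_inj.
case=> w; elim: w => [|x w IH] Hw /=.
  by rewrite -f1; congr f; apply: val_inj.
have Hw' : reduced w := path_sorted Hw.
have -> : exist _ (x :: w) Hw = FGmul (exist _ [:: x] isT) (exist _ w Hw').
  apply: val_inj; rewrite /= reduce_id //.
  by case: w {IH Hw'} Hw => [//|y w] /= /andP[/negbTE ->].
rewrite f_mul IH; congr gmul.
case: x {Hw} => k []; rewrite /eval_letter /= -f_gen //.
apply: ginv_unique; rewrite -f_mul -f1; congr f; apply: val_inj.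
by rewrite /= /cons_red /cancels /= eqxx.
Qed.

Lemma ow_lt m t (H : t < m) : ow m t = [:: (Ordinal H, false)].
Proof. by rewrite /ow insubT. Qed.

Section CocycleGenerators.

Context {L : cosimp_grp}.
Variable b : L 1.

(* zgen n k is the prescribed image (d^0)^k (d^2)^(n-k-1) b of a_(k+1) in L_n
   (and 1 when k >= n).  Only positive levels carry a d^2, hence the match. *)
Fixpoint zgen (n k : nat) {struct n} : L n :=
  match n return L n with
  | 0 => gone
  | n'.+1 => match k with
     | 0 => match n' return L n' -> L n'.+1 with
            | 0 => fun _ => b
            | n''.+1 => fun x => cof n''.+1 2 x
            end (zgen n' 0)
     | k'.+1 => cof n' 0 (zgen n' k')
     end
  end.

Lemma zgenS0 n : 0 < n -> zgen n.+1 0 = cof n 2 (zgen n 0).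
Proof. by case: n. Qed.

Lemma zgenSS n k : zgen n.+1 k.+1 = cof n 0 (zgen n k).
Proof. by []. Qed.

Lemma cof1 n i : i <= n.+1 -> cof n i (@gone (L n)) = gone.
Proof. by move=> Hi; apply: gmorph1 => x y; apply: cof_mul. Qed.

Lemma cof_zgen0 n i : 0 < n -> 2 <= i <= n.+1 -> cof n i (zgen n 0) = zgen n.+1 0.
Proof.
elim: n i => [//|n IH] i _ Hi.
have [->|Hi2] := eqVneq i 2; first by [].
have Hn : 0 < n by move: Hi Hi2; case: n {IH} => //; lia.
by rewrite zgenS0 // (cof_cof _ n 2 i) ?IH //; lia.
Qed.

Lemma cof_zgen_gt n k i : k < n -> k.+1 < i -> i <= n.+1 ->
  cof n i (zgen n k) = zgen n.+1 k.
Proof.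
elim: k n i => [|k IH] n i Hk Hki Hi; first by apply: cof_zgen0; lia.
case: n Hk Hi => [//|n] Hk Hi.
by rewrite !zgenSS (cof_cof _ n 0 i) ?(IH n i.-1) //; lia.
Qed.

Lemma cof_zgen_le n k i : i <= k -> k < n -> cof n i (zgen n k) = zgen n.+1 k.+1.
Proof.
elim: k n i => [|k IH] n i Hik Hk; first by move: Hik; rewrite leqn0 => /eqP ->.
case: i Hik => [//|i] Hik; case: n Hk => [//|n] Hk.
by rewrite !zgenSS (cof_cof _ n 0 i.+1) ?(IH n i) //; lia.
Qed.

Lemma codeg_zgen_gt n k i : k < i -> i <= n -> codeg n i (zgen n.+1 k) = zgen n k.
Proof.
elim: k n i => [|k IH] n i Hki Hi.
  elim: n i Hki Hi => [|n IHn] i Hi0 Hi; first by lia.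
  rewrite zgenS0 //.
  have [->|Hi1] := eqVneq i 1; first by rewrite codeg_cof_succ.
  have [Ei|Hi2] := eqVneq i 2; first by rewrite Ei codeg_cof_eq // -Ei.
  case: n IHn Hi => [|n] IHn Hi; first by lia.
  by rewrite codeg_cof_lt ?IHn //; lia.
case: n Hi => [|n] Hi; first by lia.
by rewrite !zgenSS codeg_cof_lt ?IH //; lia.
Qed.

Lemma codeg_zgen_lt n k i : i < k -> k <= n -> codeg n i (zgen n.+1 k) = zgen n k.-1.
Proof.
elim: k n i => [//|k IH] n i Hik Hk.
case: i Hik => [|i] Hik; first by rewrite /= codeg_cof_eq.
case: n Hk => [//|n] Hk; case: k IH Hik Hk => [|k] IH Hik Hk; first by lia.
by rewrite !zgenSS codeg_cof_lt ?IH //; lia.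
Qed.

Lemma zgen_iter_cof2 k : zgen (k + 1) 0 = iter_cof L 2 k 1 b.
Proof.
elim: k => [//|k IH].
change (zgen (k + 1).+1 0 = cof (k + 1) 2 (iter_cof L 2 k 1 b)).
by rewrite zgenS0 ?IH // addn1.
Qed.

Lemma zgen_iter_cof i k :
  zgen (i + (k + 1)) i = iter_cof L 0 i (k + 1) (iter_cof L 2 k 1 b).
Proof.
elim: i => [|i IH]; first exact: zgen_iter_cof2.
change (cof (i + (k + 1)) 0 (zgen (i + (k + 1)) i) =
        cof (i + (k + 1)) 0 (iter_cof L 0 i (k + 1) (iter_cof L 2 k 1 b))).
by rewrite IH.
Qed.

Hypothesis b_cocycle : Z1 b.

Lemma codeg_cocycle : codeg 0 0 b = gone.
Proof.
have E := f_equal (codeg 1 0) b_cocycle.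
rewrite codeg_mul // codeg_cof_gt // codeg_cof_eq // codeg_cof_succ // in E.
have E1 : cof 0 1 (codeg 0 0 b) = gone.
  by rewrite -(gmulg1 _ (cof 0 1 _)) -(gmulgV _ b) gmulA E gmulgV.
rewrite -(codeg_cof_succ L 0 0 (codeg 0 0 b)) // E1.
by apply: gmorph1 => x y; apply: codeg_mul.
Qed.

Lemma codeg_zgen_eq n i : i <= n -> codeg n i (zgen n.+1 i) = gone.
Proof.
have codeg0_zgen0 m : codeg m 0 (zgen m.+1 0) = gone.
  elim: m => [|m IHm]; first exact: codeg_cocycle.
  by rewrite zgenS0 // codeg_cof_gt // IHm cof1.
elim: i n => [|i IH] [|n] Hi //.
by rewrite /= codeg_cof_lt // IH // cof1.
Qed.

Lemma zgen0_cocycle n : 0 < n ->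
  gmul (cof n 2 (zgen n 0)) (cof n 0 (zgen n 0)) = cof n 1 (zgen n 0).
Proof.
elim: n => [//|[|n] IH] _; first exact: b_cocycle.
rewrite zgenS0 // -(cof_cof _ n.+1 2 3) // -(cof_cof _ n.+1 0 3) //.
by rewrite -(cof_cof _ n.+1 1 3) // -cof_mul // IH.
Qed.

Lemma cof_zgen_eq n k : k < n ->
  cof n k.+1 (zgen n k) = gmul (zgen n.+1 k) (zgen n.+1 k.+1).
Proof.
elim: k n => [|k IH] n Hk; first by rewrite zgenS0 // zgenSS zgen0_cocycle.
case: n Hk => [//|n] Hk.
by rewrite !zgenSS -cof_mul // -IH // (cof_cof _ n 0 k.+2) //; lia.
Qed.

Lemma eval_zgen_ow m t : t < m -> eval_word (zgen m) (ow m t) = zgen m t.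
Proof. by move=> Ht; rewrite (ow_lt _ _ Ht) /= /eval_letter /= gmulg1. Qed.

Lemma eval_Fcof_img n i (k : 'I_n) : i <= n.+1 ->
  eval_word (zgen n.+1) (Fcof_img n i k) = cof n i (zgen n k).
Proof.
case: k => k Hk Hi; rewrite /Fcof_img /=.
case: ltnP => Hik; first by rewrite eval_zgen_ow ?cof_zgen_gt //; lia.
case: eqP => [<-|Hik'].
  by rewrite eval_word_cat !eval_zgen_ow ?cof_zgen_eq //; lia.
by rewrite eval_zgen_ow ?cof_zgen_le //; lia.
Qed.

Lemma eval_Fcodeg_img n i (k : 'I_n.+1) : i <= n ->
  eval_word (zgen n) (Fcodeg_img n i k) = codeg n i (zgen n.+1 k).
Proof.
case: k => k Hk Hi; rewrite /Fcodeg_img /=.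
case: ltnP => Hki; first by rewrite eval_zgen_ow ?codeg_zgen_gt //; lia.
case: eqP => [->|Hki']; first by rewrite codeg_zgen_eq.
by rewrite eval_zgen_ow ?codeg_zgen_lt //; lia.
Qed.

Definition cocycle_map n (u : FG n) : L n := eval_word (zgen n) (sval u).

Lemma cocycle_map_mul n u v :
  cocycle_map n (FGmul u v) = gmul (cocycle_map n u) (cocycle_map n v).
Proof. by rewrite /cocycle_map /= eval_word_reduce eval_word_cat. Qed.

Lemma cocycle_map_cof n i u : i <= n.+1 ->
  cocycle_map n.+1 (Fcof n i u) = cof n i (cocycle_map n u).
Proof.
move=> Hi; apply: eval_word_Fext => [x y|k]; first exact: cof_mul.
exact: eval_Fcof_img.
Qed.

Lemma cocycle_map_codeg n i u : i <= n ->
  cocycle_map n (Fcodeg n i u) = codeg n i (cocycle_map n.+1 u).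
Proof.
move=> Hi; apply: eval_word_Fext => [x y|k]; first exact: codeg_mul.
exact: eval_Fcodeg_img.
Qed.

Definition cocycle_cmor : cmor L :=
  CMor L cocycle_map cocycle_map_mul cocycle_map_cof cocycle_map_codeg.

Lemma cocycle_cmor_a1 : cocycle_cmor 1 a1 = b.
Proof. by rewrite /= /cocycle_map /= /eval_letter /= gmulg1. Qed.

End CocycleGenerators.

Section MorphismsFromF.

Context {L : cosimp_grp}.
Variable h : cmor L.

Lemma cmor_a1_cocycle : Z1 (h 1 a1).
Proof.
rewrite /Z1 -!hmap_cof // -hmap_mul; congr (h 2 _); apply: val_inj.
by rewrite /= /Fcof_img /= (ow_lt 2 0 isT) (ow_lt 2 1 isT).
Qed.

Lemma cmor_agen n (k : 'I_n) : h n (agen k) = zgen (h 1 a1) n k.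
Proof.
elim: n k => [[]//|n IH] [[|k] Hk].
  case: n IH Hk => [|n] IH Hk; first by rewrite [RHS]/= /a1; congr (h 1 (agen _)); apply: val_inj.
  have -> : agen (Ordinal Hk) = Fcof n.+1 2 (agen (@ord0 n)).
    by apply: val_inj; rewrite /= /Fcof_img /= (ow_lt _ _ Hk).
  by rewrite hmap_cof // IH.
have Hk' : k < n by [].
have -> : agen (Ordinal Hk) = Fcof n 0 (agen (Ordinal Hk')).
  by apply: val_inj; rewrite /= /Fcof_img /= (ow_lt _ _ Hk).
by rewrite hmap_cof // IH.
Qed.

Lemma cmor_eval n (u : FG n) : h n u = cocycle_map (h 1 a1) n u.
Proof.
apply: (FG_morph_eval (h n) (zgen (h 1 a1) n)) => [v w|k].
  exact: hmap_mul.
exact: cmor_agen.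
Qed.

End MorphismsFromF.

Theorem lemma3p2 (L : cosimp_grp) :
  (* h |-> h^1(a_1) lands in Z^1(L) *)
  (forall h : cmor L, Z1 (h 1 a1)) /\
  (* it is injective *)
  (forall h h' : cmor L, h 1 a1 = h' 1 a1 -> forall n (u : FG n), h n u = h' n u) /\
  (* it is onto Z^1(L), and h_b^n(a_j) = (d^0)^(j-1) (d^2)^(n-j) (b),
     written with j = i+1 and n = i + (k+1) *)
  (forall b : L 1, Z1 b ->
     exists h : cmor L, h 1 a1 = b /\
       forall i k : nat,
         h (i + (k + 1)) (agen (Ordinal (lt_gen i k)))
         = iter_cof L 0 i (k + 1) (iter_cof L 2 k 1 b)).
Proof.
split; first exact: cmor_a1_cocycle.
split; first by move=> h h' E n u; rewrite (cmor_eval h) (cmor_eval h') E.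
move=> b b_cocycle; exists (cocycle_cmor b b_cocycle).
split; first exact: cocycle_cmor_a1.
by move=> i k; rewrite cmor_agen cocycle_cmor_a1 zgen_iter_cof.
Qed.
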